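(* Let $A$ be a synaptic algebra and $p,q\in P$. Let $r:=(p\vee q)\wedge(p\vee q^{\perp})\wedge(p^{\perp}\vee q)\wedge(p^{\perp}\vee q^{\perp})$, $r_p:=p\wedge(p^{\perp}\vee q)\wedge(p^{\perp}\vee q^{\perp})$, $r_{p^{\perp}}:=p^{\perp}\wedge(p\vee q)\wedge(p\vee q^{\perp})$, $r_q:=q\wedge(p\vee q^{\perp})\wedge(p^{\perp}\vee q^{\perp})$, $r_{q^{\perp}}:=q^{\perp}\wedge(p\vee q)\wedge(p^{\perp}\vee q)$, $c:=(pqp+p^{\perp}q^{\perp}p^{\perp})^{1/2}$, $s:=(pq^{\perp}p+p^{\perp}qp^{\perp})^{1/2}$, and $c_r:=(r_pr_qr_p+r_{p^{\perp}}r_{q^{\perp}}r_{p^{\perp}})^{1/2}$, $s_r:=(r_pr_{q^{\perp}}r_p+r_{p^{\perp}}r_qr_{p^{\perp}})^{1/2}$. Then: (i) $c_r=cr=rc$ and $s_r=sr=rs$; (ii) $c=c_r+|(p\wedge q)-(p^{\perp}\wedge q^{\perp})|$ and $s=s_r+|(p\wedge q^{\perp})-(p^{\perp}\wedge q)|$.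
   Context: Synaptic algebra (Foulis): $R$ is a real linear associative algebra with unit $1$, and $A\subseteq R$ is a real linear subspace with $1\in A$. For $a,b\in A$ write $aCb$ iff $ab=ba$; $C(a):=\{b\in A: aCb\}$; $CC(a):=\{b\in A: bCd \text{ for all } d\in C(a)\}$. $A$ is a synaptic algebra with enveloping algebra $R$ iff: (SA1) $A$ is a partially ordered archimedean real linear space with positive cone $A^+$, $1$ is an order unit, $\|\cdot\|$ the order-unit norm; (SA2) $a\in A\Rightarrow a^2\in A^+$; (SA3) $a,b\in A^+\Rightarrow aba\in A^+$; (SA4) if $a\in A$, $b\in A^+$, $aba=0$ then $ab=ba=0$; (SA5) if $a\in A^+$ there is $b\in A^+\cap CC(a)$ with $b^2=a$; (SA6) for $a\in A$ there is $p=p^2\in A$ with $ab=0\Leftrightarrow pb=0$ for all $b\in A$; (SA7) if $1\le a$ there is $b\in A$ with $ab=ba=1$; (SA8) if $a,b\in A$, $a_1\le a_2\le\cdots$ are pairwise commuting elements of $C(b)$ with $\|a-a_n\|\to0$, then $a\in C(b)$. $A$ is nondegenerate. Products are computed in $R$. $P:=\{p\in A:p=p^2\}$ with the inherited order is an orthomodular lattice with $p^{\perp}:=1-p$, meet $\wedge$, join $\vee$. For $0\le a$, $a^{1/2}$ is its unique positive square root in $A$; $|a|:=(a^2)^{1/2}$. *)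

From HB Require Import structures.
From mathcomp Require Import all_boot all_order all_algebra.
From mathcomp Require Import boolp classical_sets reals.
From Stdlib Require Import ClassicalEpsilon.
Set Implicit Arguments. Unset Strict Implicit. Unset Printing Implicit Defensive.
Import Order.TTheory GRing.Theory Num.Theory.
Local Open Scope ring_scope.

Section Synaptic.
Variables (R : realType) (V : algType R).
(* V is the enveloping algebra (a unital associative real algebra; the
   carrier is a nontrivial ring, 1 <> 0). A : V -> Prop is the subspace,
   pos : V -> Prop is the positive cone A^+. *)
Variables (A pos : V -> Prop).

Definition sle (a b : V) : Prop := pos (b - a).

Definition commutes (a b : V) : Prop := a * b = b * a.

Definition Ccom (a : V) : V -> Prop := fun b => A b /\ commutes a b.
Definition CCcom (a : V) : V -> Prop :=
  fun b => A b /\ forall d, Ccom a d -> commutes b d.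

Definition ounorm (a : V) : R :=
  inf [set e : R | 0 <= e /\ sle (- (e *: 1)) a /\ sle a (e *: 1)].

Definition synaptic : Prop :=
  [/\ A 0, A 1, (forall a b, A a -> A b -> A (a + b)),
      (forall (k : R) a, A a -> A (k *: a)) &
  ((forall a, pos a -> A a) /\ 
   [/\ (forall a b, pos a -> pos b -> pos (a + b)),
      (forall (k : R) a, 0 <= k -> pos a -> pos (k *: a)),
      (forall a, pos a -> pos (- a) -> a = 0),
      (forall a b, A a -> A b -> (forall n : nat, sle (a *+ n) b) -> sle a 0) &
      (forall a, A a -> exists n : nat, sle a (1 *+ n))]) /\
  [/\ (forall a, A a -> pos (a * a)),
      (forall a b, pos a -> pos b -> pos (a * b * a)),
      (forall a b, A a -> pos b -> a * b * a = 0 -> a * b = 0 /\ b * a = 0),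
      (forall a, pos a -> exists b, [/\ pos b, CCcom a b & b * b = a]) &
      (forall a, A a -> exists p, [/\ A p, p * p = p &
                   forall b, A b -> (a * b = 0 <-> p * b = 0)])] /\
  [/\ (forall a, A a -> sle 1 a -> exists b, A b /\ a * b = 1 /\ b * a = 1),
      (forall a b (an : nat -> V), A a -> A b ->
                   (forall n, Ccom b (an n)) ->
                   (forall m n, commutes (an m) (an n)) ->
                   (forall n, sle (an n) (an n.+1)) ->
                   (forall e : R, 0 < e -> exists N, forall n, (N <= n)%N ->
                       ounorm (a - an n) < e) ->
                   Ccom b a) &
      ~ ((1 : V) = 0)]].

Definition proj (p : V) : Prop := A p /\ p * p = p.

Definition pperp (p : V) : V := 1 - p.

Definition is_pmeet (p q m : V) : Prop :=
  [/\ proj m, sle m p, sle m q &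
      forall x, proj x -> sle x p -> sle x q -> sle x m].
Definition is_pjoin (p q j : V) : Prop :=
  [/\ proj j, sle p j, sle q j &
      forall x, proj x -> sle p x -> sle q x -> sle j x].

(* meet and join in the lattice P (chosen by Hilbert's epsilon; they exist
   and are unique because P is a lattice) *)
Definition pmeet (p q : V) : V := epsilon (inhabits 0) (is_pmeet p q).
Definition pjoin (p q : V) : V := epsilon (inhabits 0) (is_pjoin p q).

Definition psqrt (a : V) : V := epsilon (inhabits 0) (fun b => pos b /\ b * b = a).
Definition sabs (a : V) : V := psqrt (a * a).

End Synaptic.

From Pilot Require Import Defs.
From mathcomp Require Import all_boot all_algebra reals.
From Stdlib Require Import ClassicalEpsilon.
Set Implicit Arguments. Unset Strict Implicit. Unset Printing Implicit Defensive.
Import GRing.Theory.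
Local Open Scope ring_scope.

(* Put K1 = p^⊥ ∧ q^⊥, K2 = p^⊥ ∧ q, K3 = p ∧ q^⊥ and K4 = p ∧ q.  These are mutually
   orthogonal projections on each of which p and q act as the scalars 0 or 1; the four
   joins defining r are 1 - K1, ..., 1 - K4, and r = 1 - K1 - K2 - K3 - K4.  All meets in
   the statement are meets of commuting projections, hence products: r_p = p r, etc.
   Therefore c_r^2 = (pqp + p^⊥q^⊥p^⊥) r = c^2 r, and since c commutes with r, the
   positive root c r of c^2 r is c_r.  Moreover c^2 acts as 1 on K1 and K4 and as 0 on K2
   and K3, so c = c r + K1 + K4 = c_r + |K4 - K1|.  Replacing q by q^⊥ exchanges K1 with
   K2 and K3 with K4 and turns c into s. *)

Lemma sandwich_mulr_idem (V : pzRingType) (a b e : V) :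
  GRing.comm a e -> GRing.comm b e -> e * e = e ->
  a * e * (b * e) * (a * e) = a * b * a * e.
Proof.
move=> ae be ee.
have aebe : a * e * (b * e) = a * b * e by rewrite -mulrA (mulrA e) -be -mulrA ee mulrA.
by rewrite aebe -mulrA (mulrA e) -ae -(mulrA a e e) ee !mulrA.
Qed.

Section ActsScalar.
Variables (R : comPzRingType) (V : algType R).

(* For projections, [acts_scalar a K 1] says [K <= a] and [acts_scalar a K 0] says
   [K <= 1 - a]. *)
Definition acts_scalar (a K : V) (k : R) : Prop := a * K = k *: K /\ K * a = k *: K.

Lemma acts_scalar1 K : acts_scalar 1 K 1.
Proof. by rewrite /acts_scalar mul1r mulr1 scale1r. Qed.

Lemma acts_scalar_idem K : K * K = K -> acts_scalar K K 1.
Proof. by rewrite /acts_scalar scale1r. Qed.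

Lemma acts_scalarD a b K k l :
  acts_scalar a K k -> acts_scalar b K l -> acts_scalar (a + b) K (k + l).
Proof.
by move=> [aK Ka] [bK Kb]; rewrite /acts_scalar mulrDl mulrDr aK Ka bK Kb scalerDl.
Qed.

Lemma acts_scalarB a b K k l :
  acts_scalar a K k -> acts_scalar b K l -> acts_scalar (a - b) K (k - l).
Proof.
by move=> [aK Ka] [bK Kb]; rewrite /acts_scalar mulrBl mulrBr aK Ka bK Kb scalerBl.
Qed.

Lemma acts_scalarM a b K k l :
  acts_scalar a K k -> acts_scalar b K l -> acts_scalar (a * b) K (k * l).
Proof.
move=> [aK Ka] [bK Kb]; split.
  by rewrite -mulrA bK -scalerAr aK scalerA mulrC.
by rewrite mulrA Ka -scalerAl Kb scalerA.
Qed.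

Lemma acts_scalar1B a K k : acts_scalar a K k -> acts_scalar (1 - a) K (1 - k).
Proof. exact/acts_scalarB/acts_scalar1. Qed.

Lemma acts_scalarC0 a K : acts_scalar (1 - a) K 0 -> acts_scalar a K 1.
Proof. by move/acts_scalar1B; rewrite subKr subr0. Qed.

Lemma acts_scalarC1 a K : acts_scalar (1 - a) K 1 -> acts_scalar a K 0.
Proof. by move/acts_scalar1B; rewrite subKr subrr. Qed.

Lemma acts_scalar_comm a K k : acts_scalar a K k -> GRing.comm a K.
Proof. by move=> [aK Ka]; rewrite /GRing.comm aK Ka. Qed.

Lemma acts_scalar_orth a K K' :
  acts_scalar a K 0 -> acts_scalar a K' 1 -> acts_scalar K K' 0 /\ acts_scalar K' K 0.
Proof.
move=> [aK Ka] [aK' K'a]; rewrite scale1r in aK' K'a; rewrite scale0r in aK Ka.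
have KK' : K * K' = 0 by rewrite -aK' mulrA Ka mul0r.
have K'K : K' * K = 0 by rewrite -K'a -mulrA aK mulr0.
by rewrite /acts_scalar !scale0r KK' K'K.
Qed.

End ActsScalar.

Section Synaptic.
Variables (R : realType) (V : algType R) (A pos : V -> Prop).
Hypothesis HA : synaptic A pos.

Local Notation proj := (proj A).
Local Notation sle := (sle pos).
Local Notation pmeet := (pmeet A pos).
Local Notation pjoin := (pjoin A pos).
Local Notation psqrt := (psqrt pos).

Lemma subA1 : A 1. Proof. by case: HA. Qed.
Lemma subAD a b : A a -> A b -> A (a + b). Proof. by case: HA => _ _ H _ _; apply: H. Qed.
Lemma subAZ (k : R) a : A a -> A (k *: a). Proof. by case: HA => _ _ _ H _; apply: H. Qed.
Lemma pos_subA a : pos a -> A a. Proof. by case: HA => _ _ _ _ [[H _] _]; apply: H. Qed.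
Lemma posD a b : pos a -> pos b -> pos (a + b).
Proof. by case: HA => _ _ _ _ [[_ [H _ _ _ _]] _]; apply: H. Qed.
Lemma pos_antisym a : pos a -> pos (- a) -> a = 0.
Proof. by case: HA => _ _ _ _ [[_ [_ _ H _ _]] _]; apply: H. Qed.
Lemma pos_sqr a : A a -> pos (a * a).
Proof. by case: HA => _ _ _ _ [_ [[H _ _ _ _] _]]; apply: H. Qed.
Lemma pos_sandwich a b : pos a -> pos b -> pos (a * b * a).
Proof. by case: HA => _ _ _ _ [_ [[_ H _ _ _] _]]; apply: H. Qed.
Lemma sandwich_eq0 a b : A a -> pos b -> a * b * a = 0 -> a * b = 0 /\ b * a = 0.
Proof. by case: HA => _ _ _ _ [_ [[_ _ H _ _] _]]; apply: H. Qed.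
Lemma pos_sqrt_CC a : pos a -> exists b, [/\ pos b, CCcom A a b & b * b = a].
Proof. by case: HA => _ _ _ _ [_ [[_ _ _ H _] _]]; apply: H. Qed.
Lemma annihilator_proj a : A a ->
  exists e, [/\ A e, e * e = e & forall b, A b -> (a * b = 0 <-> e * b = 0)].
Proof. by case: HA => _ _ _ _ [_ [[_ _ _ _ H] _]]; apply: H. Qed.

Lemma subAB a b : A a -> A b -> A (a - b).
Proof. by move=> Aa Ab; rewrite -scaleN1r; apply/subAD/subAZ. Qed.

Lemma pos1 : pos 1.
Proof. by rewrite -(mulr1 1); apply/pos_sqr/subA1. Qed.

Lemma posD_eq0 x y : pos x -> pos y -> x + y = 0 -> x = 0.
Proof.
move=> px py /eqP; rewrite addr_eq0 => /eqP xy.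
by apply: pos_antisym; rewrite // xy opprK.
Qed.

Lemma sqr_eq0 y : A y -> y * y = 0 -> y = 0.
Proof.
move=> Ay yy; have [y1 _] : y * 1 = 0 /\ 1 * y = 0.
  by apply: sandwich_eq0 => //; [exact: pos1 | rewrite mulr1].
by rewrite -(mulr1 y).
Qed.

Lemma proj_pos e : proj e -> pos e.
Proof. by case=> Ae ee; rewrite -ee; apply: pos_sqr. Qed.

Lemma projC e : proj e -> proj (1 - e).
Proof.
case=> Ae ee; split; first exact/subAB/Ae/subA1.
by rewrite mulrBl mul1r mulrBr mulr1 ee subrr subr0.
Qed.

Lemma pos_mul_comm a b : pos a -> pos b -> GRing.comm a b -> pos (a * b).
Proof.
move=> pa pb ab; have [d [pd [_ dCC] dd]] := pos_sqrt_CC pa.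
have db : GRing.comm d b by apply: dCC; split; [apply: pos_subA | apply/esym].
by rewrite -dd -mulrA db mulrA; apply: pos_sandwich.
Qed.

(* From left to right: [(1 - f) e (1 - f)] is positive and so is its negative
   [(1 - f) (f - e) (1 - f)]; hence it vanishes and SA4 gives [(1 - f) e = e (1 - f) = 0]. *)
Lemma sle_proj e f : proj e -> proj f -> sle e f <-> acts_scalar f e 1.
Proof.
move=> pe pf; rewrite /acts_scalar scale1r; split => [ef | [fe ef]].
  have [Ag gg] := projC pf.
  have gfg : (1 - f) * (f - e) * (1 - f) = - ((1 - f) * e * (1 - f)).
    have gf : (1 - f) * f = 0 by rewrite mulrBl mul1r (proj2 pf) subrr.
    by rewrite [(1 - f) * (f - e)]mulrBr gf sub0r mulNr.
  have gpos : pos ((1 - f) * e * (1 - f)).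
    by apply: pos_sandwich; apply: proj_pos => //; exact: projC.
  have gneg : pos (- ((1 - f) * e * (1 - f))).
    by rewrite -gfg; apply: pos_sandwich => //; apply: proj_pos.
  have [ge eg] := sandwich_eq0 Ag (proj_pos pe) (pos_antisym gpos gneg).
  move: ge eg; rewrite mulrBl mulrBr mul1r mulr1 => /subr0_eq ge /subr0_eq eg.
  by split; apply/esym.
rewrite /sle; have -> : f - e = (f - e) * (f - e).
  by rewrite mulrBl !mulrBr (proj2 pf) (proj2 pe) fe ef subrr subr0.
by apply/pos_sqr/subAB; [case: pf | case: pe].
Qed.

Lemma pos_sqrt_unique_comm b d :
  pos b -> pos d -> b * b = d * d -> GRing.comm b d -> b = d.
Proof.
move=> pb pd bd cbd; set x := b - d.
have Ax : A x by apply: subAB; apply: pos_subA.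
have bx : GRing.comm b x by apply: commrB.
have dx : GRing.comm d x by apply: commrB => //; apply: commr_sym.
have xbx : pos (x * b * x).
  by rewrite -bx -mulrA; apply: pos_mul_comm (pos_sqr Ax) (commrM bx bx).
have xdx : pos (x * d * x).
  by rewrite -dx -mulrA; apply: pos_mul_comm (pos_sqr Ax) (commrM dx dx).
have xbd : x * (b + d) = 0.
  by rewrite mulrBl !mulrDr bd cbd [d * d + _]addrC subrr.
have sum0 : x * b * x + x * d * x = 0 by rewrite -mulrDl -mulrDr xbd mul0r.
have xbx0 := posD_eq0 xbx xdx sum0.
have xdx0 : x * d * x = 0 by move: sum0; rewrite xbx0 add0r.
have [xb0 _] := sandwich_eq0 Ax pb xbx0; have [xd0 _] := sandwich_eq0 Ax pd xdx0.
have xx : x * x = 0 by rewrite {2}/x mulrBr xb0 xd0 subrr.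
exact/subr0_eq/sqr_eq0.
Qed.

Lemma pos_sqrt_unique a y y' : pos y -> pos y' -> y * y = a -> y' * y' = a -> y = y'.
Proof.
move=> py py' yy y'y'; have [d [pd [_ dCC] dd]] := pos_sqrt_CC (pos_sqr (pos_subA py)).
have eq_d z : pos z -> z * z = a -> z = d.
  move=> pz zz; apply: pos_sqrt_unique_comm => //; first by rewrite dd zz.
  apply/commr_sym/dCC; split; first exact: pos_subA.
  by rewrite /commutes yy -zz mulrA.
by rewrite (eq_d y) // (eq_d y').
Qed.

Lemma psqrt_spec a : pos a -> pos (psqrt a) /\ psqrt a * psqrt a = a.
Proof.
move=> pa; apply: (epsilon_spec (inhabits 0) (fun b => pos b /\ b * b = a)).
by have [d [pd _ dd]] := pos_sqrt_CC pa; exists d.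
Qed.

Lemma psqrt_unique a b : pos b -> b * b = a -> psqrt a = b.
Proof.
move=> pb bb; have pa : pos a by rewrite -bb; apply/pos_sqr/pos_subA.
by have [ps ss] := psqrt_spec pa; apply: pos_sqrt_unique ss bb.
Qed.

Lemma psqrt_comm a z : pos a -> A z -> GRing.comm a z -> GRing.comm (psqrt a) z.
Proof.
move=> pa Az az; have [d [pd [_ dCC] dd]] := pos_sqrt_CC pa.
by rewrite (psqrt_unique pd dd); apply: dCC.
Qed.

Lemma psqrt_proj e : proj e -> psqrt e = e.
Proof. by move=> pe; apply: psqrt_unique (proj_pos pe) (proj2 pe). Qed.

Lemma psqrt_mul_proj a e :
  pos a -> proj e -> GRing.comm a e -> psqrt (a * e) = psqrt a * e.
Proof.
move=> pa pe ae; have [pb bb] := psqrt_spec pa; set b := psqrt a in pb bb *.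
have be : GRing.comm b e by apply: psqrt_comm => //; case: pe.
apply: psqrt_unique; first exact: pos_mul_comm (proj_pos pe) be.
by rewrite -mulrA (mulrA e) -be -mulrA (proj2 pe) mulrA bb.
Qed.

Lemma psqrt_acts a K k :
  pos a -> proj K -> acts_scalar a K k -> k * k = k -> psqrt a * K = k *: K.
Proof.
move=> pa pK aK kk; rewrite -psqrt_mul_proj //; last exact: acts_scalar_comm aK.
rewrite aK.1 psqrt_proj //; split; first by apply/subAZ; case: pK.
by rewrite -scalerAl -scalerAr scalerA kk (proj2 pK).
Qed.

Lemma sle_1Bl a b : sle (1 - a) b = sle (1 - b) a.
Proof. by rewrite /Defs.sle !opprB !addrA [b + a]addrC. Qed.

Lemma sle_1Br a b : sle a (1 - b) = sle b (1 - a).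
Proof. by rewrite /Defs.sle addrAC. Qed.

(* The join of [x] and [y] is the carrier of [x + y] given by SA6. *)
Lemma pjoin_exists x y : proj x -> proj y -> exists j, is_pjoin A pos x y j.
Proof.
move=> px py; have [e [Ae ee e_ann]] := annihilator_proj (subAD (proj1 px) (proj1 py)).
have pe : proj e by [].
have [Ag gg] := projC pe.
have below z : proj z -> (1 - e) * z * (1 - e) = 0 -> sle z e.
  move=> pz /(sandwich_eq0 Ag (proj_pos pz)) [gz zg].
  by apply/sle_proj/acts_scalarC0 => //; rewrite /acts_scalar scale0r.
have xyg : (x + y) * (1 - e) = 0 by apply/e_ann => //; rewrite mulrBr mulr1 ee subrr.
have gxyg : (1 - e) * x * (1 - e) + (1 - e) * y * (1 - e) = 0.
  by rewrite -mulrDl -mulrDr -mulrA xyg mulr0.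
have pg := proj_pos (projC pe).
have gxg := posD_eq0 (pos_sandwich pg (proj_pos px)) (pos_sandwich pg (proj_pos py)) gxyg.
exists e; split => //; first exact: below.
  by apply: below => //; move: gxyg; rewrite gxg add0r.
move=> z pz xz yz.
have z_ann w : proj w -> sle w z -> w * (1 - z) = 0.
  by move=> pw /(sle_proj pw pz) /acts_scalar1B [_]; rewrite subrr scale0r.
have ez : e * (1 - z) = 0.
  by apply/e_ann; [exact: (projC pz).1 | rewrite mulrDl !z_ann ?addr0].
have [ze _] : (1 - z) * e = 0 /\ e * (1 - z) = 0.
  by apply: sandwich_eq0; [exact: (projC pz).1 | exact: proj_pos | rewrite -mulrA ez mulr0].
by apply/sle_proj/acts_scalarC0 => //; rewrite /acts_scalar scale0r ze.
Qed.

Lemma pjoin_spec x y : proj x -> proj y -> is_pjoin A pos x y (pjoin x y).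
Proof. by move=> px py; apply: epsilon_spec; apply: pjoin_exists. Qed.

Lemma is_pmeet_unique x y m m' : is_pmeet A pos x y m -> is_pmeet A pos x y m' -> m = m'.
Proof.
move=> [pm mx my m_max] [pm' m'x m'y m'_max].
apply/subr0_eq/pos_antisym; first exact: m_max.
by rewrite opprB; apply: m'_max.
Qed.

Lemma is_pmeet_pjoinC x y : proj x -> proj y ->
  is_pmeet A pos x y (1 - pjoin (1 - x) (1 - y)).
Proof.
move=> px py; have [pj xj yj j_min] := pjoin_spec (projC px) (projC py).
split; [exact: projC | by rewrite sle_1Bl | by rewrite sle_1Bl |].
move=> z pz zx zy; rewrite sle_1Br; apply: j_min; first exact: projC.
  by rewrite sle_1Bl subKr.
by rewrite sle_1Bl subKr.
Qed.

Lemma pmeetE x y : proj x -> proj y -> pmeet x y = 1 - pjoin (1 - x) (1 - y).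
Proof.
move=> px py; have m_spec := is_pmeet_pjoinC px py.
apply: (is_pmeet_unique _ m_spec); apply: epsilon_spec.
by exists (1 - pjoin (1 - x) (1 - y)).
Qed.

Lemma pmeet_spec x y : proj x -> proj y -> is_pmeet A pos x y (pmeet x y).
Proof. by move=> px py; rewrite pmeetE //; apply: is_pmeet_pjoinC. Qed.

Lemma pjoinE x y : proj x -> proj y -> pjoin x y = 1 - pmeet (1 - x) (1 - y).
Proof. by move=> px py; rewrite pmeetE ?subKr //; apply: projC. Qed.

Lemma proj_subr x K : proj x -> proj K -> acts_scalar x K 1 -> proj (x - K).
Proof.
move=> px pK [xK Kx]; rewrite scale1r in xK Kx.
split; first by apply: subAB; [case: px | case: pK].
by rewrite mulrBl !mulrBr (proj2 px) (proj2 pK) xK Kx subrr subr0.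
Qed.

Lemma pmeet_subC x K : proj x -> proj K -> acts_scalar x K 1 -> pmeet x (1 - K) = x - K.
Proof.
move=> px pK xK; have [xK1 Kx1] := xK; rewrite scale1r in xK1 Kx1.
apply: (is_pmeet_unique (pmeet_spec px (projC pK))); split; first exact: proj_subr.
- apply/sle_proj => //; first exact: proj_subr.
  by rewrite /acts_scalar scale1r mulrBr mulrBl (proj2 px) xK1 Kx1.
- apply/sle_proj; [exact: proj_subr | exact: projC |].
  rewrite /acts_scalar scale1r !mulrBl !mulrBr !mul1r !mulr1 xK1 Kx1 (proj2 pK).
  by rewrite !subrr !subr0.
move=> z pz /(sle_proj pz px) xz /(sle_proj pz (projC pK)) /acts_scalarC1 Kz.
by apply/sle_proj => //; [exact: proj_subr | rewrite -[1]subr0; apply: acts_scalarB].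
Qed.

Lemma pmeet_subC2 x K K' : proj x -> proj K -> proj K' ->
  acts_scalar x K 1 -> acts_scalar x K' 1 -> acts_scalar K K' 0 ->
  pmeet (pmeet x (1 - K)) (1 - K') = x - K - K'.
Proof.
move=> px pK pK' xK xK' KK'; rewrite (pmeet_subC px pK xK); apply: pmeet_subC => //.
  exact: proj_subr.
by rewrite -[1]subr0; apply: acts_scalarB.
Qed.

Lemma sabs_subr_orth K K' : proj K -> proj K' -> acts_scalar K K' 0 ->
  sabs pos (K - K') = K + K'.
Proof.
move=> [AK KK] [AK' K'K'] [KK' K'K]; rewrite scale0r in KK' K'K.
have sq : (K - K') * (K - K') = K + K'.
  by rewrite !mulrBl !mulrBr KK K'K' KK' K'K subr0 sub0r opprK.
have idem : (K + K') * (K + K') = K + K'.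
  by rewrite mulrDl !mulrDr KK K'K' KK' K'K addr0 add0r.
apply: psqrt_unique; last by rewrite idem sq.
by apply: proj_pos; split; first exact: subAD.
Qed.

Definition corner (p q K : V) (k l : R) : Prop :=
  [/\ proj K, acts_scalar p K k & acts_scalar q K l].

Lemma corners_pmeet p q : proj p -> proj q ->
  [/\ corner p q (pmeet (1 - p) (1 - q)) 0 0, corner p q (pmeet (1 - p) q) 0 1,
      corner p q (pmeet p (1 - q)) 1 0 & corner p q (pmeet p q) 1 1].
Proof.
move=> pp pq; have pp' := projC pp; have pq' := projC pq.
have meet x y : proj x -> proj y -> [/\ proj (pmeet x y),
    acts_scalar x (pmeet x y) 1 & acts_scalar y (pmeet x y) 1].
  by move=> px py; have [? ? ? _] := pmeet_spec px py; split => //; apply/sle_proj.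
have [m1 p1 q1] := meet _ _ pp' pq'; have [m2 p2 q2] := meet _ _ pp' pq.
have [m3 p3 q3] := meet _ _ pp pq'; have [m4 p4 q4] := meet _ _ pp pq.
by split; split => //; apply: acts_scalarC1.
Qed.

Lemma corner1Br p q K k l : corner p q K k l -> corner p (1 - q) K k (1 - l).
Proof. by case=> pK pkK qK; split => //; apply: acts_scalar1B. Qed.

End Synaptic.

Section Corners.
Variables (R : realType) (V : algType R) (A pos : V -> Prop).
Hypothesis HA : synaptic A pos.
Variables p q K1 K2 K3 K4 : V.
Hypotheses (hp : proj A p) (hq : proj A q).
Hypotheses (h1 : corner A p q K1 0 0) (h2 : corner A p q K2 0 1)
           (h3 : corner A p q K3 1 0) (h4 : corner A p q K4 1 1).

Local Notation pmeet := (pmeet A pos).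
Local Notation psqrt := (psqrt pos).
Local Notation r := (1 - K1 - K2 - K3 - K4).
Local Notation cos2 := (p * q * p + (1 - p) * (1 - q) * (1 - p)).

Let pK1 : proj A K1. Proof. by case: h1. Qed.
Let pK2 : proj A K2. Proof. by case: h2. Qed.
Let pK3 : proj A K3. Proof. by case: h3. Qed.
Let pK4 : proj A K4. Proof. by case: h4. Qed.

Let o12 : acts_scalar K1 K2 0 /\ acts_scalar K2 K1 0.
Proof. by case: h1 h2 => _ _ ? [_ _ ?]; apply: (acts_scalar_orth (a := q)). Qed.
Let o34 : acts_scalar K3 K4 0 /\ acts_scalar K4 K3 0.
Proof. by case: h3 h4 => _ _ ? [_ _ ?]; apply: (acts_scalar_orth (a := q)). Qed.
Let o13 : acts_scalar K1 K3 0 /\ acts_scalar K3 K1 0.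
Proof. by case: h1 h3 => _ ? _ [_ ? _]; apply: (acts_scalar_orth (a := p)). Qed.
Let o14 : acts_scalar K1 K4 0 /\ acts_scalar K4 K1 0.
Proof. by case: h1 h4 => _ ? _ [_ ? _]; apply: (acts_scalar_orth (a := p)). Qed.
Let o23 : acts_scalar K2 K3 0 /\ acts_scalar K3 K2 0.
Proof. by case: h2 h3 => _ ? _ [_ ? _]; apply: (acts_scalar_orth (a := p)). Qed.
Let o24 : acts_scalar K2 K4 0 /\ acts_scalar K4 K2 0.
Proof. by case: h2 h4 => _ ? _ [_ ? _]; apply: (acts_scalar_orth (a := p)). Qed.

Lemma mulr_generic x k1 k2 k3 k4 :
  acts_scalar x K1 k1 -> acts_scalar x K2 k2 ->
  acts_scalar x K3 k3 -> acts_scalar x K4 k4 ->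
  x * r = x - k1 *: K1 - k2 *: K2 - k3 *: K3 - k4 *: K4.
Proof.
by move=> [xK1 _] [xK2 _] [xK3 _] [xK4 _]; rewrite !mulrBr mulr1 xK1 xK2 xK3 xK4.
Qed.

Let idem K : proj A K -> acts_scalar K K 1.
Proof. by case=> _; apply: acts_scalar_idem. Qed.

Let acts_generic K k1 k2 k3 k4 :
  acts_scalar K1 K k1 -> acts_scalar K2 K k2 ->
  acts_scalar K3 K k3 -> acts_scalar K4 K k4 ->
  acts_scalar r K (1 - k1 - k2 - k3 - k4).
Proof.
move=> a1 a2 a3 a4.
exact: (acts_scalarB (acts_scalarB (acts_scalarB (acts_scalarB (acts_scalar1 K) a1) a2) a3) a4).
Qed.

Lemma proj_generic : proj A r.
Proof.
have r1 := acts_generic (idem pK1) o12.2 o13.2 o14.2.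
have r2 := acts_generic o12.1 (idem pK2) o23.2 o24.2.
have r3 := acts_generic o13.1 o23.1 (idem pK3) o34.2.
have r4 := acts_generic o14.1 o24.1 o34.1 (idem pK4).
rewrite !subr0 !subrr in r1 r2 r3 r4.
split; last by rewrite (mulr_generic r1 r2 r3 r4) !scale0r !subr0.
by have := subAB HA (subAB HA (subAB HA (subAB HA (subA1 HA) pK1.1) pK2.1) pK3.1) pK4.1.
Qed.

Lemma comm_generic x k1 k2 k3 k4 :
  acts_scalar x K1 k1 -> acts_scalar x K2 k2 ->
  acts_scalar x K3 k3 -> acts_scalar x K4 k4 ->
  GRing.comm x r.
Proof.
move=> /acts_scalar_comm c1 /acts_scalar_comm c2 /acts_scalar_comm c3 /acts_scalar_comm c4.
exact: commrB (commrB (commrB (commrB (commr1 x) c1) c2) c3) c4.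
Qed.

Lemma pmeet_generic : pmeet (pmeet (pmeet (1 - K1) (1 - K2)) (1 - K3)) (1 - K4) = r.
Proof.
have K1K2 : acts_scalar (1 - K1) K2 1 by have := acts_scalar1B o12.1; rewrite subr0.
rewrite (pmeet_subC HA (projC HA pK1) pK2 K1K2); apply: pmeet_subC2 => //.
- exact: (proj_subr HA (projC HA pK1) pK2 K1K2).
- by have := acts_scalarB (acts_scalarB (acts_scalar1 K3) o13.1) o23.1; rewrite !subr0.
- by have := acts_scalarB (acts_scalarB (acts_scalar1 K4) o14.1) o24.1; rewrite !subr0.
exact: o34.1.
Qed.

Lemma pmeet_generic_p : pmeet (pmeet p (1 - K3)) (1 - K4) = p * r.
Proof.
case: h1 h2 h3 h4 => _ p1 _ [_ p2 _] [_ p3 _] [_ p4 _].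
rewrite (pmeet_subC2 HA hp pK3 pK4 p3 p4 o34.1) (mulr_generic p1 p2 p3 p4).
by rewrite !(scale0r, scale1r, subr0).
Qed.

Lemma pmeet_generic_1Bp : pmeet (pmeet (1 - p) (1 - K1)) (1 - K2) = (1 - p) * r.
Proof.
case: h1 h2 h3 h4 => _ /acts_scalar1B p1 _ [_ /acts_scalar1B p2 _].
move=> [_ /acts_scalar1B p3 _] [_ /acts_scalar1B p4 _].
rewrite subr0 in p1 p2; rewrite subrr in p3 p4.
rewrite (pmeet_subC2 HA (projC HA hp) pK1 pK2 p1 p2 o12.1) (mulr_generic p1 p2 p3 p4).
by rewrite !(scale0r, scale1r, subr0).
Qed.

Lemma pmeet_generic_q : pmeet (pmeet q (1 - K2)) (1 - K4) = q * r.
Proof.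
case: h1 h2 h3 h4 => _ _ q1 [_ _ q2] [_ _ q3] [_ _ q4].
rewrite (pmeet_subC2 HA hq pK2 pK4 q2 q4 o24.1) (mulr_generic q1 q2 q3 q4).
by rewrite !(scale0r, scale1r, subr0).
Qed.

Lemma pmeet_generic_1Bq : pmeet (pmeet (1 - q) (1 - K1)) (1 - K3) = (1 - q) * r.
Proof.
case: h1 h2 h3 h4 => _ _ /acts_scalar1B q1 [_ _ /acts_scalar1B q2].
move=> [_ _ /acts_scalar1B q3] [_ _ /acts_scalar1B q4].
rewrite subr0 in q1 q3; rewrite subrr in q2 q4.
rewrite (pmeet_subC2 HA (projC HA hq) pK1 pK3 q1 q3 o13.1) (mulr_generic q1 q2 q3 q4).
by rewrite !(scale0r, scale1r, subr0).
Qed.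

Lemma acts_cos2 K k l : corner A p q K k l ->
  acts_scalar cos2 K (k * l * k + (1 - k) * (1 - l) * (1 - k)).
Proof.
case=> _ pK qK; apply: (acts_scalarD (acts_scalarM (acts_scalarM pK qK) pK)).
exact: (acts_scalarM (acts_scalarM (acts_scalar1B pK) (acts_scalar1B qK)) (acts_scalar1B pK)).
Qed.

Theorem psqrt_corners :
  [/\ psqrt (p * r * (q * r) * (p * r) + (1 - p) * r * ((1 - q) * r) * ((1 - p) * r))
        = psqrt cos2 * r,
      psqrt cos2 * r = r * psqrt cos2 &
      psqrt cos2 = psqrt cos2 * r + sabs pos (K4 - K1)].
Proof.
have pcos2 : pos cos2.
  have ppq := pos_sandwich HA (proj_pos HA hp) (proj_pos HA hq).
  exact: (posD HA ppq (pos_sandwich HA (proj_pos HA (projC HA hp)) (proj_pos HA (projC HA hq)))).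
have a1 := acts_cos2 h1; have a2 := acts_cos2 h2; have a3 := acts_cos2 h3; have a4 := acts_cos2 h4.
rewrite !(subr0, subrr, mul0r, mulr0, mul1r, mulr1, add0r, addr0) in a1 a2 a3 a4.
have [Ar rr] := proj_generic; have cos2r := comm_generic a1 a2 a3 a4.
split.
- case: h1 h2 h3 h4 => _ p1 q1 [_ p2 q2] [_ p3 q3] [_ p4 q4].
  have pr := comm_generic p1 p2 p3 p4; have qr := comm_generic q1 q2 q3 q4.
  have p'r := comm_generic (acts_scalar1B p1) (acts_scalar1B p2)
                           (acts_scalar1B p3) (acts_scalar1B p4).
  have q'r := comm_generic (acts_scalar1B q1) (acts_scalar1B q2)
                           (acts_scalar1B q3) (acts_scalar1B q4).
  by rewrite !sandwich_mulr_idem // -mulrDl (psqrt_mul_proj HA pcos2 proj_generic cos2r).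
- exact: (psqrt_comm HA pcos2 Ar cos2r).
set c := psqrt cos2.
have decomp : c = c * r + c * K4 + c * K3 + c * K2 + c * K1 by rewrite -!mulrDr !subrK mulr1.
rewrite (sabs_subr_orth HA pK4 pK1 o14.2) {1}decomp.
rewrite (psqrt_acts HA pcos2 pK1 a1 (mulr1 1)) (psqrt_acts HA pcos2 pK2 a2 (mulr0 0)).
rewrite (psqrt_acts HA pcos2 pK3 a3 (mulr0 0)) (psqrt_acts HA pcos2 pK4 a4 (mulr1 1)).
by rewrite !scale1r !scale0r !addr0 addrA.
Qed.

End Corners.

Theorem theorem6p7 (R : realType) (V : algType R) (A pos : V -> Prop)
  (HA : synaptic A pos) (p q : V) (hp : proj A p) (hq : proj A q) :
  let meet := pmeet A pos in
  let join := pjoin A pos in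
  let pp := pperp p in
  let qp := pperp q in
  let r := meet (meet (meet (join p q) (join p qp)) (join pp q)) (join pp qp) in
  let r_p := meet (meet p (join pp q)) (join pp qp) in
  let r_pp := meet (meet pp (join p q)) (join p qp) in
  let r_q := meet (meet q (join p qp)) (join pp qp) in
  let r_qp := meet (meet qp (join p q)) (join pp q) in
  let c := psqrt pos (p * q * p + pp * qp * pp) in
  let s := psqrt pos (p * qp * p + pp * q * pp) in
  let c_r := psqrt pos (r_p * r_q * r_p + r_pp * r_qp * r_pp) in
  let s_r := psqrt pos (r_p * r_qp * r_p + r_pp * r_q * r_pp) in
  [/\ c_r = c * r, c * r = r * c, s_r = s * r & s * r = r * s] /\
  (c = c_r + sabs pos (meet p q - meet pp qp) /\
   s = s_r + sabs pos (meet p qp - meet pp q)).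
Proof.
cbv zeta; rewrite /pperp; have hp' := projC HA hp; have hq' := projC HA hq.
rewrite (pjoinE HA hp hq) (pjoinE HA hp hq') (pjoinE HA hp' hq) (pjoinE HA hp' hq') !subKr.
have [h1 h2 h3 h4] := corners_pmeet HA hp hq.
set K1 := pmeet A pos (1 - p) (1 - q); set K2 := pmeet A pos (1 - p) q.
set K3 := pmeet A pos p (1 - q); set K4 := pmeet A pos p q.
rewrite (pmeet_generic HA h1 h2 h3 h4) (pmeet_generic_p HA hp h1 h2 h3 h4).
rewrite (pmeet_generic_1Bp HA hp h1 h2 h3 h4) (pmeet_generic_q HA hq h1 h2 h3 h4).
rewrite (pmeet_generic_1Bq HA hq h1 h2 h3 h4).
have [cr_eq cr_comm c_eq] := psqrt_corners HA hp hq h1 h2 h3 h4.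
have := corner1Br h2; have := corner1Br h1; have := corner1Br h4; have := corner1Br h3.
rewrite subr0 subrr => h3' h4' h1' h2'.
have := psqrt_corners HA hp hq' h2' h1' h4' h3'.
rewrite subKr (addrAC 1 (- K2)) (addrAC (1 - K1 - K2) (- K4)) => -[sr_eq sr_comm s_eq].
by rewrite cr_eq sr_eq.
Qed.
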